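(* Let $\Omega$ be a compact subset of $\mathbb{R}^d$ with a probability measure $\mu$, let $q\in[1,\infty)$, and let $X_N$ be a linear subspace of real-valued functions in $L_q(\Omega)$ defined at every point of $\Omega$. Let $\mathcal{C}_N=\{f=f_R+if_I: f_R,f_I\in X_N\}$. If $X_N\in\mathcal{M}(m,q,C_2,C_3)$, then $\mathcal{C}_N\in\mathcal{M}(m,q,C_22^{-q-1},C_32^{q+1})$.
   Context: $\|f\|_q=\left(\int_\Omega|f|^q\,d\mu\right)^{1/q}$. For a subspace $X$ of $L_q(\Omega)$, $X\in\mathcal{M}(m,q,C_2,C_3)$ (with positive constants $C_2\le C_3$) means that there exist points $\xi^1,\dots,\xi^m\in\Omega$ such that $C_2\|f\|_q^q\le\frac1m\sum_{j=1}^m|f(\xi^j)|^q\le C_3\|f\|_q^q$ for all $f\in X$. *)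

From HB Require Import structures.
From mathcomp Require Import all_boot all_order all_algebra.
From mathcomp Require Import all_classical all_reals all_analysis.
From mathcomp Require Import complex.
Set Implicit Arguments. Unset Strict Implicit. Unset Printing Implicit Defensive.
Import Order.TTheory GRing.Theory Num.Theory.
Import numFieldNormedType.Exports.
Local Open Scope classical_set_scope.
Local Open Scope ring_scope.

(* R^d as row vectors, equipped with its Borel sigma-algebra
   (the sigma-algebra generated by the open sets of the product topology). *)
Definition Rd (R : realType) (d : nat) : Type := g_sigma_algebraType (@open 'rV[R]_d).

Section Defs.
Variables (R : realType) (d : nat).
Local Notation T := (Rd R d).

Definition Lq_pow (V : Type) (nrm : V -> R) (mu : {measure set T -> \bar R})
  (Omega : set T) (q : R) (f : T -> V) : \bar R :=
  (\int[mu]_(x in Omega) ((nrm (f x)) `^ q)%:E)%E.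

Definition inM (V : Type) (nrm : V -> R) (mu : {measure set T -> \bar R})
  (Omega : set T) (m : nat) (q C2 C3 : R) (X : set (T -> V)) : Prop :=
  exists xi : 'I_m -> T, (forall j, Omega (xi j)) /\
    forall f, X f ->
      (C2%:E * Lq_pow nrm mu Omega q f
         <= ((m%:R)^-1 * \sum_(j < m) (nrm (f (xi j))) `^ q)%:E)%E /\
      (((m%:R)^-1 * \sum_(j < m) (nrm (f (xi j))) `^ q)%:E
         <= C3%:E * Lq_pow nrm mu Omega q f)%E.

Definition is_subspace (X : set (T -> R)) : Prop :=
  X (fun _ => 0) /\ (forall f g, X f -> X g -> X (fun x => f x + g x)) /\
  (forall (a : R) f, X f -> X (fun x => a * f x)).

Definition in_Lq (mu : {measure set T -> \bar R}) (Omega : set T) (q : R)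
  (f : T -> R) : Prop :=
  measurable_fun Omega f /\ (Lq_pow Num.norm mu Omega q f < +oo)%E.

Definition complexify (X : set (T -> R)) : set (T -> R[i]) :=
  [set f | exists fR fI, X fR /\ X fI /\ f = (fun x => fR x +i* fI x)%C].

End Defs.

From HB Require Import structures.
From mathcomp Require Import all_boot all_order all_algebra.
From mathcomp Require Import all_classical all_reals all_analysis.
From mathcomp Require Import complex.
From mathcomp Require Import ring lra measurable_realfun.
Set Implicit Arguments.
Unset Strict Implicit.
Unset Printing Implicit Defensive.
Import Order.TTheory GRing.Theory Num.Theory.
Import numFieldNormedType.Exports.
Local Open Scope classical_set_scope.
Local Open Scope ring_scope.

(* Pointwise, |f_R|, |f_I| <= |f| <= |f_R| + |f_I|
   <= 2 max(|f_R|, |f_I|), hence |f_R|^q, |f_I|^q <= |f|^q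
   <= 2^q (|f_R|^q + |f_I|^q).  Both the integral over Omega and the sample
   mean over the points xi^j are monotone and additive, so these bounds hold
   for ||.||_q^q and for its discretisation alike.  Feeding in the sampling
   inequalities for f_R and f_I, averaging the two components costs a factor 2
   and the comparison a factor 2^q, whence the constants C_2 2^(-q-1) and
   C_3 2^(q+1). *)

Lemma powRDr1 (R : realType) (x r : R) : 0 < x -> x `^ (r + 1) = x * x `^ r.
Proof.
by move=> x_gt0; rewrite powRD ?(gt_eqF x_gt0) ?implybT // powRr1 ?ltW // mulrC.
Qed.

Lemma powRNr1 (R : realType) (x r : R) :
  0 < x -> x `^ (- r - 1) = (x * x `^ r)^-1.
Proof. by move=> x_gt0; rewrite -opprD powRN powRDr1. Qed.

Section normc_components.
Variable R : realType.
Implicit Types x y q : R.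

Lemma normc_ge_normRe x y : `|x| <= Normc.normc (x +i* y)%C.
Proof.
by rewrite /= -sqrtr_sqr ler_sqrt ?addr_ge0 ?sqr_ge0 // lerDl sqr_ge0.
Qed.

Lemma normc_ge_normIm x y : `|y| <= Normc.normc (x +i* y)%C.
Proof. by rewrite /= addrC (normc_ge_normRe y x). Qed.

Lemma normc_le_normD x y : Normc.normc (x +i* y)%C <= `|x| + `|y|.
Proof.
rewrite /= -[leRHS]ger0_norm ?addr_ge0 // -sqrtr_sqr ler_sqrt ?sqr_ge0 //.
rewrite sqrrD !real_normK ?num_real // -addrA lerD2l lerDr.
by rewrite mulrn_wge0 // mulr_ge0.
Qed.

Lemma powR_normc_le x y q : 0 <= q ->
  Normc.normc (x +i* y)%C `^ q <= 2 `^ q * (`|x| `^ q + `|y| `^ q).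
Proof.
move=> q_ge0; wlog xy : x y / `|x| <= `|y|.
  move=> hwlog; have [/hwlog //|/ltW yx] := leP `|x| `|y|.
  by have := hwlog y x yx; rewrite /= addrC [_ + `|x| `^ q]addrC.
have le_2y : Normc.normc (x +i* y)%C <= 2 * `|y|.
  by apply: le_trans (normc_le_normD x y) _; lra.
rewrite (le_trans (ge0_ler_powR q_ge0 _ _ le_2y)) ?nnegrE ?sqrtr_ge0 //.
by rewrite powRM // ler_wpM2l ?powR_ge0 // lerDr powR_ge0.
Qed.

End normc_components.

Lemma measurable_closed (R : realType) (d : nat) (A : set (Rd R d)) :
  closed (A : set 'rV[R]_d) -> measurable A.
Proof.
move=> /closed_openC oAC; rewrite -[A]setCK; apply: measurableC.
exact: sub_sigma_algebra.
Qed.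

Lemma measurable_fun_EFin_powR d (T : measurableType d) (R : realType)
    (D : set T) (g : T -> R) (q : R) :
  measurable_fun D g -> measurable_fun D (fun x => (g x `^ q)%:E).
Proof.
move=> mg; apply/measurable_EFinP.
exact: measurableT_comp (@measurable_powR R q) mg.
Qed.

Section integral_complexify.
Context d (T : measurableType d) (R : realType).
Variable mu : {measure set T -> \bar R}.
Variables (D : set T) (q : R) (fR fI : T -> R).
Hypotheses (mD : measurable D) (q_ge0 : 0 <= q).
Hypotheses (mfR : measurable_fun D fR) (mfI : measurable_fun D fI).

Let powR_ge0E (z : R) : (0 <= (z `^ q)%:E)%E.
Proof. by rewrite lee_fin powR_ge0. Qed.

Let mRe : measurable_fun D (fun x => (`|fR x| `^ q)%:E).
Proof. exact/measurable_fun_EFin_powR/measurableT_comp. Qed.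

Let mIm : measurable_fun D (fun x => (`|fI x| `^ q)%:E).
Proof. exact/measurable_fun_EFin_powR/measurableT_comp. Qed.

Let mC : measurable_fun D (fun x => (Normc.normc (fR x +i* fI x)%C `^ q)%:E).
Proof.
apply: measurable_fun_EFin_powR => /=.
apply: measurableT_comp (continuous_measurable_fun (@sqrt_continuous R)) _.
by apply: measurable_funD; exact: measurable_funX.
Qed.

Lemma integral_powR_normRe_le :
  (\int[mu]_(x in D) (`|fR x| `^ q)%:E
     <= \int[mu]_(x in D) (Normc.normc (fR x +i* fI x)%C `^ q)%:E)%E.
Proof.
apply: ge0_le_integral => // x _.
by rewrite lee_fin ge0_ler_powR ?nnegrE ?sqrtr_ge0 ?normc_ge_normRe.
Qed.

Lemma integral_powR_normIm_le :
  (\int[mu]_(x in D) (`|fI x| `^ q)%:E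
     <= \int[mu]_(x in D) (Normc.normc (fR x +i* fI x)%C `^ q)%:E)%E.
Proof.
apply: ge0_le_integral => // x _.
by rewrite lee_fin ge0_ler_powR ?nnegrE ?sqrtr_ge0 ?normc_ge_normIm.
Qed.

Lemma integral_powR_normc_le :
  (\int[mu]_(x in D) (Normc.normc (fR x +i* fI x)%C `^ q)%:E
     <= (2 `^ q)%:E * (\int[mu]_(x in D) (`|fR x| `^ q)%:E
                       + \int[mu]_(x in D) (`|fI x| `^ q)%:E))%E.
Proof.
rewrite -ge0_integralD // -ge0_integralZl ?lee_fin ?powR_ge0 //; last 2 first.
- exact: emeasurable_funD.
- by move=> x _; exact: adde_ge0.
apply: ge0_le_integral => //.
- exact/measurable_funeM/emeasurable_funD.
- by move=> x _; rewrite -EFinD -EFinM lee_fin powR_normc_le.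
Qed.

End integral_complexify.

Section mean_complexify.
Variables (R : realType) (m : nat) (q : R) (x y : 'I_m -> R).
Hypothesis q_ge0 : 0 <= q.

Let ler_mean (u v : 'I_m -> R) : (forall j, u j <= v j) ->
  (m%:R)^-1 * \sum_(j < m) u j <= (m%:R)^-1 * \sum_(j < m) v j.
Proof. by move=> uv; rewrite ler_wpM2l ?invr_ge0 // ler_sum. Qed.

Lemma mean_powR_normRe_le :
  (m%:R)^-1 * \sum_(j < m) `|x j| `^ q
    <= (m%:R)^-1 * \sum_(j < m) Normc.normc (x j +i* y j)%C `^ q.
Proof.
apply: ler_mean => j.
by rewrite ge0_ler_powR ?nnegrE ?sqrtr_ge0 ?normc_ge_normRe.
Qed.

Lemma mean_powR_normIm_le :
  (m%:R)^-1 * \sum_(j < m) `|y j| `^ q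
    <= (m%:R)^-1 * \sum_(j < m) Normc.normc (x j +i* y j)%C `^ q.
Proof.
apply: ler_mean => j.
by rewrite ge0_ler_powR ?nnegrE ?sqrtr_ge0 ?normc_ge_normIm.
Qed.

Lemma mean_powR_normc_le :
  (m%:R)^-1 * \sum_(j < m) Normc.normc (x j +i* y j)%C `^ q
    <= 2 `^ q * ((m%:R)^-1 * \sum_(j < m) `|x j| `^ q
                 + (m%:R)^-1 * \sum_(j < m) `|y j| `^ q).
Proof.
have := @ler_mean _ (fun j => 2 `^ q * (`|x j| `^ q + `|y j| `^ q))
  (fun j => powR_normc_le (x j) (y j) q_ge0).
move/le_trans; apply.
by rewrite -mulr_sumr big_split /= mulrCA mulrDr.
Qed.

End mean_complexify.

Lemma in_Lq_fin_num (R : realType) (d : nat)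
    (mu : {measure set Rd R d -> \bar R}) (Omega : set (Rd R d)) (q : R)
    (f : Rd R d -> R) :
  in_Lq mu Omega q f -> Lq_pow Num.norm mu Omega q f \is a fin_num.
Proof.
case=> _; rewrite ge0_fin_numE //.
by apply: integral_ge0 => x _; rewrite lee_fin powR_ge0.
Qed.

Lemma componentwise_sandwich (R : realFieldType) (C2 C3 K a b r sa sb s : R) :
  0 <= C2 -> 0 <= C3 -> 0 < K ->
  a <= r -> b <= r -> r <= K * (a + b) ->
  sa <= s -> sb <= s -> s <= K * (sa + sb) ->
  C2 * a <= sa <= C3 * a -> C2 * b <= sb <= C3 * b ->
  C2 / (2 * K) * r <= s /\ s <= C3 * (2 * K) * r.
Proof.
move=> C2_ge0 C3_ge0 K_gt0 ar br r_le sas sbs s_le.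
move=> /andP[C2a aC3] /andP[C2b bC3].
split.
- have : C2 / (2 * K) * r <= C2 / (2 * K) * (K * (a + b)).
    by apply: ler_wpM2l => //; rewrite divr_ge0 // mulr_ge0 // ltW.
  have -> : C2 / (2 * K) * (K * (a + b)) = (C2 * a + C2 * b) / 2.
    by field; rewrite gt_eqF.
  lra.
- have : K * (sa + sb) <= K * (C3 * (2 * r)).
    apply: ler_wpM2l; first exact: ltW.
    by have := ler_wpM2l C3_ge0 ar; have := ler_wpM2l C3_ge0 br; lra.
  have -> : K * (C3 * (2 * r)) = C3 * (2 * K) * r by ring.
  lra.
Qed.

Lemma componentwise_sandwichE (R : realFieldType) (C2 C3 K sa sb s : R)
    (A B F : \bar R) :
  0 <= C2 -> 0 <= C3 -> 0 < K -> A \is a fin_num -> B \is a fin_num ->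
  (A <= F)%E -> (B <= F)%E -> (F <= K%:E * (A + B))%E ->
  sa <= s -> sb <= s -> s <= K * (sa + sb) ->
  (C2%:E * A <= sa%:E)%E /\ (sa%:E <= C3%:E * A)%E ->
  (C2%:E * B <= sb%:E)%E /\ (sb%:E <= C3%:E * B)%E ->
  ((C2 / (2 * K))%:E * F <= s%:E)%E /\ (s%:E <= (C3 * (2 * K))%:E * F)%E.
Proof.
move=> C2_ge0 C3_ge0 K_gt0 /EFin_fin_numP[a ->] /EFin_fin_numP[b ->] AF BF FAB.
have /EFin_fin_numP[r rE] : F \is a fin_num.
  rewrite fin_numElt (lt_le_trans _ AF) ?ltNyr //.
  by rewrite (le_lt_trans FAB) // -EFinD -EFinM ltry.
move: AF BF FAB; rewrite rE -EFinD -!EFinM !lee_fin.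
move=> AF BF FAB sas sbs s_le [C2a aC3] [C2b bC3].
by apply: (componentwise_sandwich C2_ge0 C3_ge0 K_gt0 AF BF FAB sas sbs s_le);
  apply/andP.
Qed.

Theorem proposition2p1 (R : realType) (d : nat) (Omega : set (Rd R d))
  (mu : {measure set (Rd R d) -> \bar R}) (q : R) (X : set (Rd R d -> R))
  (m : nat) (C2 C3 : R) :
  compact (Omega : set 'rV[R]_d) ->
  mu Omega = 1%E ->
  1 <= q ->
  0 < C2 -> C2 <= C3 ->
  is_subspace X ->
  (forall f, X f -> in_Lq mu Omega q f) ->
  inM Num.norm mu Omega m q C2 C3 X ->
  inM (@Normc.normc R) mu Omega m q
      (C2 * 2 `^ (- q - 1)) (C3 * 2 `^ (q + 1)) (complexify X).
Proof.
move=> cO _ q_ge1 C2_gt0 C23 _ XLq [xi [xiO hX]].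
have q_ge0 : 0 <= q by lra.
have mO : measurable Omega by apply: measurable_closed; exact: compact_closed.
exists xi; split => // _ [fR [fI [XfR [XfI ->]]]].
have [mfR _] := XLq _ XfR; have [mfI _] := XLq _ XfI.
rewrite powRNr1 // powRDr1 //.
apply: componentwise_sandwichE (hX _ XfR) (hX _ XfI) => //.
- exact: ltW.
- exact: le_trans (ltW C2_gt0) C23.
- exact: in_Lq_fin_num (XLq _ XfR).
- exact: in_Lq_fin_num (XLq _ XfI).
- exact: integral_powR_normRe_le.
- exact: integral_powR_normIm_le.
- exact: integral_powR_normc_le.
- exact: mean_powR_normRe_le.
- exact: mean_powR_normIm_le.
- exact: mean_powR_normc_le.
Qed.
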